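(* Let $V$ be a toroidal vertex algebra. For $\mathbf{m}\in\mathbb{Z}^r$ set $V_{(\mathbf{m})}=\{v_{-1,-\mathbf{m}}\mathbf{1}\mid v\in V\}$. Then $V^0=\bigoplus_{\mathbf{m}\in\mathbb{Z}^r}V_{(\mathbf{m})}$, and with this grading the vertex algebra $(V^0,Y^0,\mathbf{1})$ is a vertex $\mathbb{Z}^r$-graded algebra.
   Context: Fix a positive integer $r$. Write $\mathbf{x}=(x_1,\dots,x_r)$, $\mathbf{x}^{\mathbf{m}}=x_1^{m_1}\cdots x_r^{m_r}$ (similarly for other variables), $\mathbf{z}\mathbf{y}=(z_1y_1,\dots,z_ry_r)$. For a vector space $W$ put $\mathcal{E}(W,r)=\mathrm{Hom}(W,W[[x_1^{\pm1},\dots,x_r^{\pm1}]]((x_0)))$. A toroidal vertex algebra is a vector space $V$ with a linear map $Y(\cdot;x_0,\mathbf{x}):V\to\mathcal{E}(V,r)$, $v\mapsto\sum_{(m_0,\mathbf{m})\in\mathbb{Z}\times\mathbb{Z}^r}v_{m_0,\mathbf{m}}x_0^{-m_0-1}\mathbf{x}^{-\mathbf{m}}$, and a vector $\mathbf{1}$ with $Y(\mathbf{1};x_0,\mathbf{x})v=v$, $Y(v;x_0,\mathbf{x})\mathbf{1}\in V[[x_0,x_1^{\pm1},\dots,x_r^{\pm1}]]$, and the Jacobi identity $$z_0^{-1}\delta\!\left(\tfrac{x_0-y_0}{z_0}\right)Y(u;x_0,\mathbf{z}\mathbf{y})Y(v;y_0,\mathbf{y})-z_0^{-1}\delta\!\left(\tfrac{y_0-x_0}{-z_0}\right)Y(v;y_0,\mathbf{y})Y(u;x_0,\mathbf{z}\mathbf{y})=y_0^{-1}\delta\!\left(\tfrac{x_0-z_0}{y_0}\right)Y(Y(u;z_0,\mathbf{z})v;y_0,\mathbf{y})$$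 for all $u,v$, where $Y(u;x_0,\mathbf{z}\mathbf{y})=\sum u_{m_0,\mathbf{m}}x_0^{-m_0-1}\mathbf{z}^{-\mathbf{m}}\mathbf{y}^{-\mathbf{m}}$. $V^0=\mathrm{span}\{v_{m_0,\mathbf{m}}\mathbf{1}\}$; for $v\in V^0$, $Y(v;x_0,\mathbf{x})$ is a Laurent polynomial in $x_1,\dots,x_r$ and $Y^0(v,x_0)=Y(v;x_0,\mathbf{x})|_{\mathbf{x}=1}$ makes $(V^0,Y^0,\mathbf{1})$ a vertex algebra. A vertex $\mathbb{Z}^r$-graded algebra is a vertex algebra $U$ with a grading $U=\bigoplus_{\mathbf{m}\in\mathbb{Z}^r}U_{(\mathbf{m})}$ such that $\mathbf{1}\in U_{(\mathbf{0})}$ and $u_kv\in U_{(\mathbf{m}+\mathbf{n})}$ for $u\in U_{(\mathbf{m})}$, $v\in U_{(\mathbf{n})}$, $k\in\mathbb{Z}$. *)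

From HB Require Import structures.
From mathcomp Require Import all_boot all_order all_algebra.
Set Implicit Arguments. Unset Strict Implicit. Unset Printing Implicit Defensive.
Import Order.TTheory GRing.Theory Num.Theory.
Local Open Scope ring_scope.

(* Generalized binomial coefficient binom(n, i) for n : int, i : nat,
   i.e. n(n-1)...(n-i+1)/i!.  For n = -(k+1) (Negz k) it equals
   (-1)^i * C(k+i, i). *)
Definition gbin (n : int) (i : nat) : int :=
  match n with
  | Posz n' => ('C(n', i))%:Z
  | Negz k => (-1) ^+ i * ('C(k + i, i))%:Z
  end.

Section Toroidal.
Variables (K : fieldType) (V : lmodType K) (r : nat).

(* A "toroidal vertex operator" is encoded by its modes:
   Y u m0 m w = u_{m0, m} w, where
   Y(u; x0, x) = sum_{(m0, m)} u_{m0,m} x0^{-m0-1} x^{-m}. *)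
Definition modes := V -> int -> 'rV[int]_r -> V -> V.

Definition modes_linear (Y : modes) : Prop :=
  (forall (a : K) u1 u2 m0 m w,
      Y (a *: u1 + u2) m0 m w = a *: Y u1 m0 m w + Y u2 m0 m w) /\
  (forall (a : K) u m0 m w1 w2,
      Y u m0 m (a *: w1 + w2) = a *: Y u m0 m w1 + Y u m0 m w2).

(* Y(u; x0, x) w lies in V[[x^{+-1}]]((x0)): only finitely many negative
   powers of x0, i.e. u_{m0,m} w = 0 for m0 large, uniformly in m. *)
Definition modes_truncation (Y : modes) : Prop :=
  forall u w, exists N : int, forall m0 m, N <= m0 -> Y u m0 m w = 0.

(* Y(1; x0, x) v = v *)
Definition vacuum_property (Y : modes) (one : V) : Prop :=
  forall m0 m v, Y one m0 m v = if (m0 == -1) && (m == 0) then v else 0.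

(* Y(v; x0, x) 1 in V[[x0, x^{+-1}]] *)
Definition creation_property (Y : modes) (one : V) : Prop :=
  forall v m0 m, 0 <= m0 -> Y v m0 m one = 0.

(* Coefficients of x0^{-p-1} y0^{-q-1} z0^{-s-1} z^{-m} y^{-k} of the three
   terms of the Jacobi identity applied to w, with the (finitely supported)
   sums over the binomial-expansion index truncated at N.
   z0^{-1} delta((x0-y0)/z0) = sum_n z0^{-n-1} (x0-y0)^n, expanded in
   nonnegative powers of y0, etc. *)
Definition jacobi_term1 (Y : modes) u v w (p q s : int) (m k : 'rV[int]_r)
  (N : nat) : V :=
  \sum_(i < N) (((-1) ^+ i * gbin s i)%:~R : K) *:
      Y u (p + s - (i : nat)%:Z) m (Y v (q + (i : nat)%:Z) (k - m) w).

Definition jacobi_term2 (Y : modes) u v w (p q s : int) (m k : 'rV[int]_r)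
  (N : nat) : V :=
  \sum_(i < N) (((-1) ^+ (absz s) * (-1) ^+ i * gbin s i)%:~R : K) *:
      Y v (q + s - (i : nat)%:Z) (k - m) (Y u (p + (i : nat)%:Z) m w).

Definition jacobi_term3 (Y : modes) u v w (p q s : int) (m k : 'rV[int]_r)
  (N : nat) : V :=
  \sum_(j < N) (((-1) ^+ j * gbin ((j : nat)%:Z - p - 1) j)%:~R : K) *:
      Y (Y u (s + (j : nat)%:Z) m v) (p + q - (j : nat)%:Z) k w.

(* The Jacobi identity, coefficientwise. Each of the sums above is
   eventually constant in N (by truncation), and the identity says the
   stabilized values agree. *)
Definition jacobi_identity (Y : modes) : Prop :=
  forall u v w (p q s : int) (m k : 'rV[int]_r),
    exists N0 : nat, forall N : nat, (N0 <= N)%N ->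
      jacobi_term1 Y u v w p q s m k N - jacobi_term2 Y u v w p q s m k N
      = jacobi_term3 Y u v w p q s m k N.

Definition toroidal_vertex_algebra (Y : modes) (one : V) : Prop :=
  [/\ modes_linear Y, modes_truncation Y, vacuum_property Y one,
      creation_property Y one & jacobi_identity Y].

(* V^0 = span { v_{m0,m} 1 } *)
Definition inV0 (Y : modes) (one : V) (x : V) : Prop :=
  exists s : seq (K * V * int * 'rV[int]_r),
    x = \sum_(t <- s) t.1.1.1 *: Y t.1.1.2 t.1.2 t.2 one.

Definition inVm (Y : modes) (one : V) (m : 'rV[int]_r) (x : V) : Prop :=
  exists v : V, x = Y v (-1) (- m) one.

End Toroidal.

(* Two instances of the Jacobi identity with w = 1 or v = 1, in which the creation
   property kills all but one binomial term, give
     (u_{s,m} v)_{-1,k} 1 = u_{s,m} v_{-1,k-m} 1   and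
     (a_{-1,m'} 1)_{t,k} = 0  for k <> m'.
   The first shows that v_{n,l} 1 lies in V_(-l), so V^0 is spanned by the V_(m);
   the second shows that x in V_(m) is recovered as x_{-1,-m} 1 while
   x_{-1,k} 1 = 0 for k <> -m, which makes the sum direct.  Finally for u in V_(m),
   u_{k,l} w vanishes unless l = -m, and the first identity places
   u_{k,-m} w_{-1,-n} 1 in V_(m+n). *)

From HB Require Import structures.
From mathcomp Require Import all_boot all_order all_algebra zify.
Import Order.TTheory GRing.Theory Num.Theory.
Set Implicit Arguments. Unset Strict Implicit.
Local Open Scope ring_scope.

Lemma gbin0 (n : int) : gbin n 0 = 1.
Proof. by case: n => n /=; rewrite ?expr0 ?mul1r ?bin0. Qed.

Lemma big_ord_recl_eq0 (M : nmodType) (N : nat) (F : 'I_N.+1 -> M) :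
  (forall i : 'I_N, F (lift ord0 i) = 0) -> \sum_(i < N.+1) F i = F ord0.
Proof. by move=> F0; rewrite big_ord_recl big1 ?addr0. Qed.

Lemma big_pred1_uniq (M : nmodType) (I : eqType) (s : seq I) (j : I) (F : I -> M) :
  uniq s -> j \in s -> \sum_(i <- s | i == j) F i = F j.
Proof.
by move=> us js; rewrite -big_filter filter_pred1_uniq // big_seq1.
Qed.

Lemma big_partition_seq (M : nmodType) (I J : eqType) (s : seq I) (p : I -> J)
    (F : I -> M) :
  \sum_(i <- s) F i = \sum_(j <- undup (map p s)) \sum_(i <- s | p i == j) F i.
Proof.
rewrite (exchange_big_dep predT) //=; apply: eq_big_seq => i si.
under eq_bigl do rewrite eq_sym.
by rewrite big_pred1_uniq ?undup_uniq // mem_undup map_f.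
Qed.

Section ModesLinear.
Variables (K : fieldType) (V : lmodType K) (r : nat) (Y : modes V r).
Hypothesis Ylin : modes_linear Y.

Lemma Ymode0r u m0 m : Y u m0 m 0 = 0.
Proof.
have := (proj2 Ylin) 1 u m0 m 0 0; rewrite !scale1r addr0 => Y0.
by apply: (addrI (Y u m0 m 0)); rewrite addr0 -Y0.
Qed.

Lemma Ymode0l m0 m w : Y 0 m0 m w = 0.
Proof.
have := (proj1 Ylin) 1 0 0 m0 m w; rewrite !scale1r addr0 => Y0.
by apply: (addrI (Y 0 m0 m w)); rewrite addr0 -Y0.
Qed.

Lemma YmodeDl u1 u2 m0 m w : Y (u1 + u2) m0 m w = Y u1 m0 m w + Y u2 m0 m w.
Proof. by have := (proj1 Ylin) 1 u1 u2 m0 m w; rewrite !scale1r. Qed.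

Lemma YmodeZl (a : K) u m0 m w : Y (a *: u) m0 m w = a *: Y u m0 m w.
Proof. by have := (proj1 Ylin) a u 0 m0 m w; rewrite !addr0 Ymode0l addr0. Qed.

Lemma Ymode_suml (I : Type) (s : seq I) (F : I -> V) m0 m w :
  Y (\sum_(i <- s) F i) m0 m w = \sum_(i <- s) Y (F i) m0 m w.
Proof.
elim: s => [|i s IHs]; first by rewrite !big_nil Ymode0l.
by rewrite !big_cons YmodeDl IHs.
Qed.

End ModesLinear.

Section ToroidalVertexAlgebra.
Variables (K : fieldType) (V : lmodType K) (r : nat) (Y : modes V r) (one : V).
Hypothesis HV : toroidal_vertex_algebra Y one.

Let Ylin : modes_linear Y. Proof. by case: HV. Qed.
Let Yvac : vacuum_property Y one. Proof. by case: HV. Qed.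
Let Ycre : creation_property Y one. Proof. by case: HV. Qed.

Lemma jacobi_identity_at u v w p q s m k :
  exists N : nat,
    jacobi_term1 Y u v w p q s m k N.+1 - jacobi_term2 Y u v w p q s m k N.+1
    = jacobi_term3 Y u v w p q s m k N.+1.
Proof.
case: HV => _ _ _ _ /(_ u v w p q s m k) [N0 HN0].
by exists N0; exact: HN0 (leqnSn N0).
Qed.

Lemma mode_comp_vacuum u v s m k :
  Y (Y u s m v) (-1) k one = Y u s m (Y v (-1) (k - m) one).
Proof.
have [N] := jacobi_identity_at u v one 0 (-1) s m k.
rewrite /jacobi_term1 /jacobi_term2 /jacobi_term3.
rewrite [X in X - _ = _]big_ord_recl_eq0 => [|i]; last first.
  by rewrite Ycre ?(Ymode0r Ylin) ?scaler0 //= /bump /=; lia.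
rewrite big1 => [|i _]; last by rewrite Ycre ?(Ymode0r Ylin) ?scaler0 //; lia.
rewrite big_ord_recl_eq0 => [|i]; last first.
  by rewrite /= /bump /= add1n addn0 subn1 bin_small ?mulr0 ?scale0r.
by rewrite /= !gbin0 !expr0 !mul1r !scale1r add0r addr0 !subr0 => ->.
Qed.

Lemma descendant_mode_eq0 a m' t k w :
  k != m' -> Y (Y a (-1) m' one) t k w = 0.
Proof.
move=> km'; have km'F : (k - m' == 0) = false by rewrite subr_eq0 (negbTE km').
have [N] := jacobi_identity_at a one w t 0 (-1) m' k.
rewrite /jacobi_term1 /jacobi_term2 /jacobi_term3.
rewrite [X in X - _ = _]big1 => [|i _]; last first.
  by rewrite Yvac km'F andbF (Ymode0r Ylin) scaler0.
rewrite big1 => [|i _]; last by rewrite Yvac km'F andbF scaler0.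
rewrite big_ord_recl_eq0 => [|i]; last first.
  by rewrite Ycre ?(Ymode0l Ylin) ?scaler0 //= /bump /=; lia.
by rewrite /= gbin0 expr0 mul1r scale1r !addr0 !subr0 => <-.
Qed.

Lemma vacuum_mode_proj v n l : Y (Y v n l one) (-1) l one = Y v n l one.
Proof. by rewrite mode_comp_vacuum subrr Yvac !eqxx. Qed.

Lemma vacuum_mode_inVm v n l : inVm Y one (- l) (Y v n l one).
Proof. by exists (Y v n l one); rewrite opprK vacuum_mode_proj. Qed.

Lemma inVm_vacuum_mode m x k :
  inVm Y one m x -> Y x (-1) k one = if k == - m then x else 0.
Proof.
case=> v ->; have [->|km] := eqVneq k (- m); first exact: vacuum_mode_proj.
exact: descendant_mode_eq0.
Qed.

Lemma inVm_vacuum : inVm Y one 0 one.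
Proof. by exists one; rewrite Yvac oppr0 !eqxx. Qed.

Lemma inVm0 m : inVm Y one m 0.
Proof. by exists 0; rewrite (Ymode0l Ylin). Qed.

Lemma inVmD m x y : inVm Y one m x -> inVm Y one m y -> inVm Y one m (x + y).
Proof. by case=> [a ->] [b ->]; exists (a + b); rewrite (YmodeDl Ylin). Qed.

Lemma inVmZ m (c : K) x : inVm Y one m x -> inVm Y one m (c *: x).
Proof. by case=> [a ->]; exists (c *: a); rewrite (YmodeZl Ylin). Qed.

Lemma inVm_sum (I : Type) (s : seq I) (P : pred I) (F : I -> V) m :
  (forall i, P i -> inVm Y one m (F i)) -> inVm Y one m (\sum_(i <- s | P i) F i).
Proof. by move=> HF; apply: big_ind; [exact: inVm0|exact: inVmD|]. Qed.

Lemma inV0_sum_inVm x :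
  inV0 Y one x <-> exists (ms : seq 'rV[int]_r) (f : 'rV[int]_r -> V),
    (forall m, inVm Y one m (f m)) /\ x = \sum_(m <- ms) f m.
Proof.
split.
  case=> s ->; pose T := (K * V * int * 'rV[int]_r)%type.
  pose g (t : T) := t.1.1.1 *: Y t.1.1.2 t.1.2 t.2 one.
  pose deg (t : T) := - t.2.
  exists (undup (map deg s)), (fun m => \sum_(t <- s | deg t == m) g t).
  split; last exact: big_partition_seq.
  move=> m; apply: inVm_sum => t /eqP <-; exact/inVmZ/vacuum_mode_inVm.
case=> ms [f [Hf ->]]; apply: (big_ind (inV0 Y one)).
- by exists [::]; rewrite big_nil.
- by move=> _ _ [s1 ->] [s2 ->]; exists (s1 ++ s2); rewrite big_cat.
- move=> m _; have [v ->] := Hf m.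
  by exists [:: (1, v, -1, - m)]; rewrite big_seq1 scale1r.
Qed.

Lemma sum_inVm_direct (ms : seq 'rV[int]_r) (f : 'rV[int]_r -> V) :
  uniq ms -> (forall m, m \in ms -> inVm Y one m (f m)) ->
  \sum_(m <- ms) f m = 0 -> forall m, m \in ms -> f m = 0.
Proof.
move=> ums Hf sum0 m0 m0ms.
have := congr1 (fun x => Y x (-1) (- m0) one) sum0.
rewrite /= (Ymode_suml Ylin) (Ymode0l Ylin) => <-.
rewrite -(big_pred1_uniq f ums m0ms) big_mkcond; apply: eq_big_seq => m mms.
by rewrite (inVm_vacuum_mode _ (Hf m mms)) eqr_opp eq_sym.
Qed.

Lemma inVm_mode_eq0 m u :
  inVm Y one m u -> forall k l w, l != - m -> Y u k l w = 0.
Proof. by case=> a -> k l w; apply: descendant_mode_eq0. Qed.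

Lemma inVm_modeD m n u w :
  inVm Y one m u -> inVm Y one n w -> forall k, inVm Y one (m + n) (Y u k (- m) w).
Proof.
move=> _ [b ->] k; exists (Y u k (- m) b).
by rewrite mode_comp_vacuum opprD opprK addrAC addNr add0r.
Qed.

End ToroidalVertexAlgebra.

Theorem proposition3p2 (K : fieldType) (V : lmodType K) (r : nat)
  (Y : modes V r) (one : V) :
  [pchar K] =i pred0 ->
  toroidal_vertex_algebra Y one ->
  (* V^0 = sum_m V_(m) *)
  (forall x : V, inV0 Y one x <->
     exists (ms : seq 'rV[int]_r) (f : 'rV[int]_r -> V),
       (forall m, inVm Y one m (f m)) /\ x = \sum_(m <- ms) f m) /\
  (* the sum is direct *)
  (forall (ms : seq 'rV[int]_r) (f : 'rV[int]_r -> V),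
     uniq ms -> (forall m, m \in ms -> inVm Y one m (f m)) ->
     \sum_(m <- ms) f m = 0 -> forall m, m \in ms -> f m = 0) /\
  (* vertex Z^r-graded algebra: 1 in V_(0) *)
  inVm Y one 0 one /\
  (* u^0_k w := sum_l u_{k,l} w (= coefficient of x0^{-k-1} in
     Y(u; x0, x)|_{x = 1} w) is a finite sum and lies in V_(m+n) *)
  (forall (m n : 'rV[int]_r) (u w : V) (k : int),
     inVm Y one m u -> inVm Y one n w ->
     exists S : seq 'rV[int]_r,
       [/\ uniq S, (forall l, l \notin S -> Y u k l w = 0)
         & inVm Y one (m + n) (\sum_(l <- S) Y u k l w)]).
Proof.
move=> _ HV; split; [|split; [|split]].
- exact: inV0_sum_inVm.
- exact: sum_inVm_direct.
- exact: inVm_vacuum.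
- move=> m n u w k Hu Hw; exists [:: - m]; split => //.
    by move=> l; rewrite mem_seq1; apply: (inVm_mode_eq0 HV Hu).
  by rewrite big_seq1; apply: (inVm_modeD HV Hu Hw).
Qed.
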